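(* For every history $H$ generated by KSFTM and every transaction $T_i$ of $H$, the values after the last event of $H$ satisfy $tltl_i \le ct_i$.
   Context: Algorithm KSFTM (parameters $K\ge1$, $C>0$, $incVal\ge1$). Global atomic counter $G\_tCntr$, initially 1. Each t-object $x$ stores at most $K$ versions $\langle ts, val, rl, vrt\rangle$; initially $\langle 0,0,\emptyset,0\rangle$. Transaction $T_i$ has $its_i, cts_i, wts_i$, limits $tltl_i, tutl_i$, commit time $ct_i$, flag $valid_i$, status. begin($its$): $cts_i$ := counter value, counter atomically incremented; $its_i := cts_i$ if $its$ nil else $its$; $wts_i := cts_i + C(cts_i-its_i)$; $tltl_i := cts_i$; $tutl_i := ct_i := \infty$. read($x$) (non-local): $cur$ := version with largest $ts < wts_i$ (abort if none); if a version $next$ with smallest $ts>wts_i$ exists, $tutl_i := \min(tutl_i, next.vrt-1)$; $tltl_i := \max(tltl_i, cur.vrt+1)$; abort if $tltl_i > tutl_i$; otherwise record the read in $cur.rl$. tryC: abort if $valid_i$ false; for written $x$: $prev_x$ (largest $ts<wts_i$, abort if none), $next_x$ (smallest $ts>wts_i$); conflict checks against readers of $prev_x$ with larger $wts$ (abort $T_i$ or mark them); $tltl_i := \max(tltl_i, prev_x.vrt+1)$, $tutl_i := \min(tutl_i, next_x.vrt-1)$; $ct_i$ := counter atomically increased by $incVal$ (new value); $tutl_i := \min(tutl_i, ct_i)$; abort if $tltl_i > tutl_i$; checks against readers $T_k$ of $prev_x$ with smaller $wts$ and $tltl_k \ge tutl_i$ (abort $T_i$ or mark $T_k$); then $tltl_i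 := tutl_i$; for such unaborted readers $T_k$, $tutl_k := \min(tutl_k, tltl_i-1)$; invalidate marked transactions; install for each written $x$ the version $\langle wts_i, v, \emptyset, tltl_i\rangle$; commit. abort: $valid_i$ false, status abort. *)

(* Model of the KSFTM algorithm as a labelled transition
   system; each STM operation (begin, read, write, tryC, abort) is one atomic
   step. *)
From mathcomp Require Import all_boot all_order all_algebra.
Set Implicit Arguments. Unset Strict Implicit. Unset Printing Implicit Defensive.
Import Order.TTheory GRing.Theory Num.Theory.
Local Open Scope ring_scope.

Inductive xint := XFin of int | XInf.

Definition xle (a b : xint) : bool :=
  match a, b with
  | _, XInf => true
  | XInf, XFin _ => false
  | XFin x, XFin y => x <= y
  end.

Definition xmin (a b : xint) : xint :=
  match a, b with
  | XInf, _ => b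
  | _, XInf => a
  | XFin x, XFin y => XFin (Num.min x y)
  end.

Inductive status := Live | Committed | Aborted.

Definition upd {T : Type} (f : nat -> T) (x : nat) (v : T) : nat -> T :=
  fun y => if y == x then v else f y.

Section Model.
(* timestamps wts live in an arbitrary real field R (C may be non-integral) *)
Variable R : realFieldType.

Record version := Version { v_ts : R; v_val : nat; v_rl : seq nat; v_vrt : int }.
Definition dver : version := Version 0 0 [::] 0.

Record txn := Txn {
  t_its : int; t_cts : int; t_wts : R;
  t_tltl : int; t_tutl : xint; t_ct : xint;
  t_valid : bool; t_status : status;
  t_rset : seq (nat * nat);   (* local read buffer (object, value) *)
  t_wset : seq (nat * nat)    (* local write buffer, newest first *)
}.

Record state := St {
  counter : int;
  store : nat -> seq version;
  txns : nat -> option txn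
}.

Definition init_state : state :=
  St 1 (fun _ => [:: Version 0 0 [::] 0]) (fun _ => None).

Definition is_live (t : txn) : bool :=
  if t_status t is Live then true else false.
Definition not_aborted (t : txn) : bool :=
  if t_status t is Aborted then false else true.

Definition prev_idx (L : seq version) (w : R) : option nat :=
  foldl (fun acc (p : nat * version) =>
    let (k, v) := p in
    if v_ts v < w then
      match acc with
      | None => Some k
      | Some j => if v_ts (nth dver L j) < v_ts v then Some k else acc
      end
    else acc) None (zip (iota 0 (size L)) L).

Definition next_idx (L : seq version) (w : R) : option nat :=
  foldl (fun acc (p : nat * version) =>
    let (k, v) := p in
    if w < v_ts v then
      match acc with
      | None => Some k
      | Some j => if v_ts v < v_ts (nth dver L j) then Some k else acc
      end
    else acc) None (zip (iota 0 (size L)) L).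

Definition min_idx (L : seq version) : nat :=
  foldl (fun j (p : nat * version) =>
    let (k, v) := p in
    if v_ts v < v_ts (nth dver L j) then k else j) 0%N (zip (iota 0 (size L)) L).

Definition rem_idx (L : seq version) (n : nat) : seq version :=
  take n L ++ drop n.+1 L.

Definition set_limits (t : txn) (tl : int) (tu ct : xint) : txn :=
  Txn (t_its t) (t_cts t) (t_wts t) tl tu ct (t_valid t) (t_status t)
      (t_rset t) (t_wset t).
Definition set_status (t : txn) (b : bool) (st : status) : txn :=
  Txn (t_its t) (t_cts t) (t_wts t) (t_tltl t) (t_tutl t) (t_ct t) b st
      (t_rset t) (t_wset t).
Definition set_bufs (t : txn) (rs ws : seq (nat * nat)) : txn :=
  Txn (t_its t) (t_cts t) (t_wts t) (t_tltl t) (t_tutl t) (t_ct t)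
      (t_valid t) (t_status t) rs ws.
Definition abort_txn (t : txn) : txn := set_status t false Aborted.

Definition set_txn (s : state) (i : nat) (t : txn) : state :=
  St (counter s) (store s) (upd (txns s) i (Some t)).

Variables (K : nat) (C : R) (incVal : nat).

Definition trimK (L : seq version) : seq version :=
  if (K < size L)%N then rem_idx L (min_idx L) else L.

Definition wts_of (s : state) (k : nat) : option R :=
  omap t_wts (txns s k).

Definition written (t : txn) : seq nat := undup (map fst (t_wset t)).

Definition wval (t : txn) (x : nat) : nat :=
  odflt 0%N (omap snd (ohead [seq p <- t_wset t | p.1 == x])).

Definition big_readers (s : state) (v : version) (w : R) : seq nat :=
  [seq k <- v_rl v | if wts_of s k is Some wk then w < wk else false].
Definition small_readers (s : state) (v : version) (w : R) : seq nat :=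
  [seq k <- v_rl v | if wts_of s k is Some wk then wk < w else false].

(* first phase of tryC over the write set; pick x = true means that a
   conflict with a larger reader of prev_x is resolved by aborting T_i.
   inl (tltl,tutl) : aborted with these values;
   inr (tltl,tutl,marks) : continue. *)
Definition phase1_step (s : state) (t : txn) (pick : nat -> bool)
    (acc : (int * xint) + (int * xint * seq nat)) (x : nat) :=
  match acc with
  | inl _ => acc
  | inr (tl, tu, mk) =>
    let L := store s x in
    match prev_idx L (t_wts t) with
    | None => inl (tl, tu)
    | Some p =>
      let pv := nth dver L p in
      let big := big_readers s pv (t_wts t) in
      if pick x && (big != [::]) then inl (tl, tu) else
      let tl' := Num.max tl (v_vrt pv + 1) in
      let tu' := match next_idx L (t_wts t) with
                 | None => tu
                 | Some q => xmin tu (XFin (v_vrt (nth dver L q) - 1))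
                 end in
      inr (tl', tu', big ++ mk)
    end
  end.

Definition prev_small (s : state) (t : txn) (x : nat) : seq nat :=
  let L := store s x in
  match prev_idx L (t_wts t) with
  | None => [::]
  | Some p => small_readers s (nth dver L p) (t_wts t)
  end.

Definition map_txns (f : txn -> txn) (P : txn -> bool) (ks : seq nat)
    (m : nat -> option txn) : nat -> option txn :=
  foldl (fun m k => match m k with
                    | Some tk => if P tk then upd m k (Some (f tk)) else m
                    | None => m end) m ks.

Definition install (t : txn) (tl : int) (st : nat -> seq version)
    : nat -> seq version :=
  foldl (fun st x =>
    upd st x (trimK (Version (t_wts t) (wval t x) [::] tl :: st x)))
    st (written t).

(* tryC of T_i (live) with oracles for conflict resolution *)
Definition tryC_exec (pick1 : nat -> bool) (pick2 : bool)
    (s : state) (i : nat) (t : txn) : state :=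
  if ~~ t_valid t then set_txn s i (abort_txn t) else
  match foldl (phase1_step s t pick1) (inr (t_tltl t, t_tutl t, [::]))
              (written t) with
  | inl (tl, tu) =>
      set_txn s i (abort_txn (set_limits t tl tu (t_ct t)))
  | inr (tl, tu, mk) =>
    let ct := counter s + incVal%:Z in
    let s1 := St ct (store s) (txns s) in
    let tu2 := xmin tu (XFin ct) in
    if ~~ xle (XFin tl) tu2 then
      set_txn s1 i (abort_txn (set_limits t tl tu2 (XFin ct)))
    else
    let small := flatten [seq prev_small s t x | x <- written t] in
    let confl := [seq k <- small |
                  if txns s k is Some tk then xle tu2 (XFin (t_tltl tk))
                  else false] in
    if pick2 && (confl != [::]) then
      set_txn s1 i (abort_txn (set_limits t tl tu2 (XFin ct)))
    else
    let tlf := if tu2 is XFin v then v else ct in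
    let m1 := map_txns (fun tk => set_limits tk (t_tltl tk)
                          (xmin (t_tutl tk) (XFin (tlf - 1))) (t_ct tk))
                       not_aborted small (txns s) in
    let m2 := map_txns (fun tk => set_status tk false (t_status tk))
                       (fun _ => true) (mk ++ confl) m1 in
    let st' := install t tlf (store s) in
    let t' := set_status (set_limits t tlf tu2 (XFin ct)) (t_valid t) Committed in
    St ct st' (upd m2 i (Some t'))
  end.

Inductive event :=
| EBegin of nat & option int     (* transaction id, optional its *)
| ERead of nat & nat             (* transaction id, t-object *)
| EWrite of nat & nat & nat      (* transaction id, t-object, value *)
| ETryC of nat
| EAbort of nat.

Inductive step : state -> event -> state -> Prop :=
| st_begin s i oits :
    txns s i = None ->
    let cts := counter s in
    let its := if oits is Some a then a else cts in
    let wts := cts%:~R + C * (cts - its)%:~R in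
    step s (EBegin i oits)
      (St (cts + 1) (store s)
          (upd (txns s) i (Some (Txn its cts wts cts XInf XInf true Live [::] [::]))))
| st_read_local s i x t :
    txns s i = Some t -> is_live t ->
    (x \in map fst (t_wset t)) || (x \in map fst (t_rset t)) ->
    step s (ERead i x) s
| st_read_none s i x t :
    txns s i = Some t -> is_live t ->
    ~~ ((x \in map fst (t_wset t)) || (x \in map fst (t_rset t))) ->
    prev_idx (store s x) (t_wts t) = None ->
    step s (ERead i x) (set_txn s i (abort_txn t))
| st_read s i x t p :
    txns s i = Some t -> is_live t ->
    ~~ ((x \in map fst (t_wset t)) || (x \in map fst (t_rset t))) ->
    prev_idx (store s x) (t_wts t) = Some p ->
    let L := store s x in
    let cur := nth dver L p in
    let tu := match next_idx L (t_wts t) with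
              | None => t_tutl t
              | Some q => xmin (t_tutl t) (XFin (v_vrt (nth dver L q) - 1))
              end in
    let tl := Num.max (t_tltl t) (v_vrt cur + 1) in
    let t1 := set_limits t tl tu (t_ct t) in
    step s (ERead i x)
      (if ~~ xle (XFin tl) tu then set_txn s i (abort_txn t1)
       else
         let cur' := Version (v_ts cur) (v_val cur) (i :: v_rl cur) (v_vrt cur) in
         St (counter s) (upd (store s) x (set_nth dver L p cur'))
            (upd (txns s) i (Some (set_bufs t1 ((x, v_val cur) :: t_rset t1)
                                             (t_wset t1)))))
| st_write s i x v t :
    txns s i = Some t -> is_live t ->
    step s (EWrite i x v) (set_txn s i (set_bufs t (t_rset t) ((x, v) :: t_wset t)))
| st_tryC s i t pick1 pick2 :
    txns s i = Some t -> is_live t ->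
    step s (ETryC i) (tryC_exec pick1 pick2 s i t)
| st_abort s i t :
    txns s i = Some t -> is_live t ->
    step s (EAbort i) (set_txn s i (abort_txn t)).

Inductive generated : seq event -> state -> Prop :=
| gen_nil : generated [::] init_state
| gen_snoc h s e s' : generated h s -> step s e s' -> generated (rcons h e) s'.

End Model.

From mathcomp Require Import all_boot all_order all_algebra.
From mathcomp Require Import zify.
Set Implicit Arguments. Unset Strict Implicit. Unset Printing Implicit Defensive.
Import Order.TTheory GRing.Theory Num.Theory.
Local Open Scope ring_scope.

(* The theorem follows from an invariant of reachable states: the counter is
   nonnegative, every stored version has [vrt <= counter], and every
   transaction has [tltl <= counter + 1], [tltl <= ct], and [ct = +oo] while
   it is live.  A read raises [tltl] to at most [vrt + 1 <= counter + 1] and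
   leaves [ct = +oo].  Only tryC assigns [ct], namely the new counter value
   [counter + incVal >= counter + 1], and on commit it sets [tltl] to
   [tutl <= ct]; the versions it installs carry that [tltl]. *)

Lemma all_nth (T : Type) (a : pred T) x0 s i : a x0 -> all a s -> a (nth x0 s i).
Proof.
move=> ax0 /(all_nthP x0) as_; case: (ltnP i (size s)) => [/as_ //|le_s_i].
by rewrite nth_default.
Qed.

Lemma all_set_nth (T : Type) (a : pred T) x0 s n y :
  a x0 -> a y -> all a s -> all a (set_nth x0 s n y).
Proof.
move=> ax0 ay as_; apply/(all_nthP x0) => i _; rewrite nth_set_nth /=.
by case: eqP => // _; exact: all_nth.
Qed.

Lemma all_trimK (R : realFieldType) K (a : pred (version R)) L :
  all a L -> all a (trimK K L).
Proof.
rewrite /trimK /rem_idx; case: ifP => // _ aL; rewrite all_cat.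
have all_take_drop n : all a (take n L) && all a (drop n L).
  by rewrite -all_cat cat_take_drop.
case/andP: (all_take_drop (min_idx L)) => -> _.
by case/andP: (all_take_drop (min_idx L).+1).
Qed.

Lemma xmin_fin_le tu (c : int) : exists2 v, xmin tu (XFin c) = XFin v & v <= c.
Proof.
case: tu => [a|] /=; last by exists c.
by exists (Num.min a c); rewrite // ge_min lexx orbT.
Qed.

Section Invariant.

Variable R : realFieldType.

Lemma upd_SomeP (m : nat -> option (txn R)) i t k t' :
  upd m i (Some t) k = Some t' -> t' = t \/ m k = Some t'.
Proof. by rewrite /upd; case: eqP => _; [case=> ->; left | right]. Qed.

Lemma map_txns_preserves (Q : txn R -> Prop) f P ks m :
  (forall t, Q t -> Q (f t)) -> (forall k t, m k = Some t -> Q t) ->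
  forall k t, map_txns f P ks m k = Some t -> Q t.
Proof.
move=> Qf; elim: ks m => [|k ks IH] m Qm //=; apply: IH.
case mk: (m k) => [tk|] //; case: (P tk) => //.
by move=> k' t' /upd_SomeP [->|]; [exact: Qf (Qm _ _ mk) | exact: Qm].
Qed.

Definition vrt_le (c : int) (st : nat -> seq (version R)) : Prop :=
  forall x, all (fun v => v_vrt v <= c) (st x).

Definition limits_ok (c : int) (t : txn R) : Prop :=
  [/\ t_tltl t <= c + 1, xle (XFin (t_tltl t)) (t_ct t)
    & is_live t -> t_ct t = XInf].

Definition ksftm_inv (s : state R) : Prop :=
  [/\ 0 <= counter s, vrt_le (counter s) (store s)
    & forall i t, txns s i = Some t -> limits_ok (counter s) t].

Lemma vrt_le_mono c c' st : c <= c' -> vrt_le c st -> vrt_le c' st.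
Proof. by move=> le_c st_c x; apply: sub_all (st_c x) => v /= /le_trans; apply. Qed.

Lemma vrt_le_nth c st x n :
  0 <= c -> vrt_le c st -> v_vrt (nth (dver R) (st x) n) <= c.
Proof. by move=> c_ge0 st_c; apply: (all_nth (a := fun v => v_vrt v <= c)). Qed.

Lemma vrt_le_install K t tl st c :
  tl <= c -> vrt_le c st -> vrt_le c (install K t tl st).
Proof.
move=> le_tl_c; rewrite /install; elim: (written t) st => [|x xs IH] st st_c //=.
apply: IH => y; rewrite /upd; case: eqP => _; last exact: st_c.
by apply: all_trimK; rewrite /= le_tl_c st_c.
Qed.

Lemma limits_ok_mono c c' t : c <= c' -> limits_ok c t -> limits_ok c' t.
Proof. by move=> le_c [tl_c ct_ok live_inf]; split=> //; lia. Qed.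

Lemma limits_ok_live c t :
  t_tltl t <= c + 1 -> t_ct t = XInf -> limits_ok c t.
Proof. by move=> tl_c ct_inf; split; rewrite // ct_inf. Qed.

Lemma limits_ok_transfer c t t' :
  t_tltl t' = t_tltl t -> t_ct t' = t_ct t -> (is_live t' -> is_live t) ->
  limits_ok c t -> limits_ok c t'.
Proof.
by rewrite /limits_ok => -> -> live' [tl_c ct_ok live_inf]; split=> // /live'.
Qed.

Lemma ksftm_invI c st m i t :
  0 <= c -> vrt_le c st -> (forall k tk, m k = Some tk -> limits_ok c tk) ->
  limits_ok c t -> ksftm_inv (St c st (upd m i (Some t))).
Proof. by move=> c_ge0 st_c m_ok t_ok; split=> // k tk /upd_SomeP [->|/m_ok]. Qed.

Definition phase1_tltl (acc : (int * xint) + (int * xint * seq nat)) : int :=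
  match acc with inl (tl, _) => tl | inr (tl, _, _) => tl end.

Lemma phase1_tltl_le s t pick xs acc :
  ksftm_inv s -> phase1_tltl acc <= counter s + 1 ->
  phase1_tltl (foldl (phase1_step s t pick) acc xs) <= counter s + 1.
Proof.
move=> [c_ge0 st_c _]; elim: xs acc => [|x xs IH] [[tl tu]|[[tl tu] mk]] //= tl_c.
all: apply: IH; rewrite /phase1_step //; case: prev_idx => [p|] //; case: ifP => //= _.
by have := vrt_le_nth x p c_ge0 st_c; lia.
Qed.

Lemma tryC_exec_inv K incVal s i t pick1 pick2 :
  (1 <= incVal)%N -> ksftm_inv s -> txns s i = Some t -> is_live t ->
  ksftm_inv (tryC_exec K incVal pick1 pick2 s i t).
Proof.
move=> incVal_gt0 inv_s ti live_t; have [c_ge0 st_c txns_ok] := inv_s.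
have [tl_c _ live_inf] := txns_ok _ _ ti; have ct_inf := live_inf live_t.
rewrite /tryC_exec; case: (t_valid t) => /=; last first.
  by apply: ksftm_invI => //; apply: limits_ok_transfer (txns_ok _ _ ti).
have := @phase1_tltl_le s t pick1 (written t) (inr (t_tltl t, t_tutl t, [::]))
  inv_s tl_c.
case: foldl => [[tl tu]|[[tl tu] mk]] /= tl_c'.
  by apply: ksftm_invI => //; apply: limits_ok_live.
set c' := counter s + incVal%:Z.
have le_c_c' : counter s <= c' by lia.
have c'_ge0 : 0 <= c' by lia.
have old_ok k tk : txns s k = Some tk -> limits_ok c' tk.
  by move/txns_ok; apply: limits_ok_mono.
have st_c' := vrt_le_mono le_c_c' st_c.
have aborted_ok tu2 : limits_ok c' (abort_txn (set_limits t tl tu2 (XFin c'))).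
  by split=> //=; lia.
case: ifP => _; first exact: ksftm_invI (aborted_ok _).
case: ifP => _; first exact: ksftm_invI (aborted_ok _).
have [v -> le_v_c'] := xmin_fin_le tu c'.
apply: ksftm_invI => //.
- exact: vrt_le_install.
- by do 2 apply: map_txns_preserves => // ? ?; apply: limits_ok_transfer.
- by split=> //=; lia.
Qed.

Lemma step_inv K C incVal s e s' :
  (1 <= incVal)%N -> ksftm_inv s -> step K C incVal s e s' -> ksftm_inv s'.
Proof.
move=> incVal_gt0 inv_s step_s; case: step_s inv_s.
- move=> {}s i oits _ cts its wts [c_ge0 st_c txns_ok].
  have le_c_c1 : cts <= cts + 1 by lia.
  apply: ksftm_invI; rewrite /cts; first lia.
  + exact: vrt_le_mono st_c.
  + by move=> k tk /txns_ok; apply: limits_ok_mono.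
  + by apply: limits_ok_live => //=; lia.
- by [].
- move=> {}s i x t ti _ _ _ [c_ge0 st_c txns_ok].
  by apply: ksftm_invI => //; apply: limits_ok_transfer (txns_ok _ _ ti).
- move=> {}s i x t p ti live_t _ _ L cur tu tl t1 [c_ge0 st_c txns_ok].
  have [tl_c _ live_inf] := txns_ok _ _ ti; have ct_inf := live_inf live_t.
  have cur_c : v_vrt cur <= counter s by exact: vrt_le_nth.
  have tl1_c : tl <= counter s + 1 by rewrite /tl; lia.
  case: ifP => _; first by apply: ksftm_invI => //; apply: limits_ok_live.
  apply: ksftm_invI => //; last by apply: limits_ok_live.
  move=> y; rewrite /upd; case: eqP => _; last exact: st_c.
  by apply: all_set_nth; [| exact: cur_c | exact: st_c].
- move=> {}s i x v t ti _ [c_ge0 st_c txns_ok].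
  by apply: ksftm_invI => //; apply: limits_ok_transfer (txns_ok _ _ ti).
- by move=> {}s i t pick1 pick2 ti live_t inv_s; apply: tryC_exec_inv.
- move=> {}s i t ti _ [c_ge0 st_c txns_ok].
  by apply: ksftm_invI => //; apply: limits_ok_transfer (txns_ok _ _ ti).
Qed.

Lemma generated_inv K C incVal h s :
  (1 <= incVal)%N -> generated K C incVal h s -> ksftm_inv s.
Proof.
move=> incVal_gt0; elim=> [|{}h s0 e s' _ inv_s0 step_s0]; last exact: step_inv step_s0.
by split=> //= x; rewrite andbT.
Qed.

End Invariant.

Theorem lemma14 (R : realFieldType) (K : nat) (C : R) (incVal : nat)
  (HK : (1 <= K)%N) (HC : 0 < C) (Hinc : (1 <= incVal)%N)
  (H : seq event) (s : state R) :
  generated K C incVal H s ->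
  forall (i : nat) (t : txn R), txns s i = Some t ->
  xle (XFin (t_tltl t)) (t_ct t).
Proof.
by move=> /(generated_inv Hinc) [_ _ txns_ok] i t /txns_ok [].
Qed.
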